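(* Let $\alpha$ be a set with an involution $\tau$. For $a,b\in\alpha$ let $w_{a,b}$ denote the nanoword $(\{A,B\},ABAB)$ with $|A|=a$, $|B|=b$. If $\tau(a)\neq b$, then $w_{a,b}$ is not contractible. Two nanowords $w_{a,b}$ and $w_{a',b'}$ with $\tau(a)\neq b$ and $\tau(a')\neq b'$ are homotopic if and only if $a=a'$ and $b=b'$.
   Context: Fix a set $\alpha$ with an involution $\tau:\alpha\to\alpha$. An $\alpha$-alphabet is a set $\mathcal A$ with a map $\mathcal A\to\alpha$, $A\mapsto|A|$. A nanoword over $\alpha$ is a pair $(\mathcal A,w)$ where $\mathcal A$ is a finite $\alpha$-alphabet and $w$ is a word in the letters of $\mathcal A$ in which every letter of $\mathcal A$ occurs exactly twice; its length is the length of $w$. Two nanowords $(\mathcal A_1,w_1),(\mathcal A_2,w_2)$ are isomorphic if there is a bijection $f:\mathcal A_1\to\mathcal A_2$ with $|f(A)|=|A|$ for all $A$ and $w_2$ is obtained from $w_1$ by applying $f$ letterwise. Homotopy moves (here $x,y,z,t$ are words in the remaining letters, and smaller alphabets carry the restricted projection): (1) $(\mathcal A,xAAy)\mapsto(\mathcal A\setminus\{A\},xy)$; (2) $(\mathcal A,xAByBAz)\mapsto(\mathcal A\setminus\{A,B\},xyz)$ whenever $|B|=\tau(|A|)$; (3) $(\mathcal A,xAByACzBCt)\mapsto(\mathcal A,xBAyCAzCBt)$ whenever $A,B,C$ are distinct and $|A|=|B|=|C|$. Homotopy is the equivalence relation on nanowords generated by isomorphisms, these moves and their inverses. A nanoword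 is contractible if it is homotopic to the empty nanoword. *)

From mathcomp Require Import all_boot.
Set Implicit Arguments. Unset Strict Implicit. Unset Printing Implicit Defensive.

(* Letters are drawn from nat (every finite alphabet is
   isomorphic to a finite subset of nat, and homotopy is invariant under
   isomorphism).  The alphabet of a nanoword is the set of letters occurring in
   its word; [nw_proj] is the projection |.| (its values outside the alphabet
   are irrelevant: isomorphisms only look at letters of the word). *)
Record nanoword (alpha : Type) := Nanoword {
  nw_word : seq nat;
  nw_proj : nat -> alpha }.

Definition wf_nanoword alpha (u : nanoword alpha) : Prop :=
  forall x, x \in nw_word u -> count_mem x (nw_word u) = 2.

Definition nw_iso alpha (u v : nanoword alpha) : Prop :=
  exists f : nat -> nat,
    {in nw_word u &, injective f} /\
    map f (nw_word u) = nw_word v /\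
    (forall x, x \in nw_word u -> nw_proj v (f x) = nw_proj u x).

Inductive nw_move alpha (tau : alpha -> alpha) : nanoword alpha -> nanoword alpha -> Prop :=
| move1 (p : nat -> alpha) (A : nat) (x y : seq nat) :
    nw_move tau (Nanoword (x ++ [:: A; A] ++ y) p) (Nanoword (x ++ y) p)
| move2 (p : nat -> alpha) (A B : nat) (x y z : seq nat) :
    p B = tau (p A) ->
    nw_move tau (Nanoword (x ++ [:: A; B] ++ y ++ [:: B; A] ++ z) p)
                (Nanoword (x ++ y ++ z) p)
| move3 (p : nat -> alpha) (A B C : nat) (x y z t : seq nat) :
    A <> B -> A <> C -> B <> C -> p A = p B -> p B = p C ->
    nw_move tau
      (Nanoword (x ++ [:: A; B] ++ y ++ [:: A; C] ++ z ++ [:: B; C] ++ t) p)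
      (Nanoword (x ++ [:: B; A] ++ y ++ [:: C; A] ++ z ++ [:: C; B] ++ t) p).

Inductive homotopic alpha (tau : alpha -> alpha) : nanoword alpha -> nanoword alpha -> Prop :=
| hom_iso u v : wf_nanoword u -> wf_nanoword v -> nw_iso u v -> homotopic tau u v
| hom_move u v : wf_nanoword u -> wf_nanoword v -> nw_move tau u v -> homotopic tau u v
| hom_sym u v : homotopic tau u v -> homotopic tau v u
| hom_trans u v w : homotopic tau u v -> homotopic tau v w -> homotopic tau u w.

Definition contractible alpha (tau : alpha -> alpha) (u : nanoword alpha) : Prop :=
  homotopic tau u (Nanoword [::] (nw_proj u)).

Definition w_ab alpha (a b : alpha) : nanoword alpha :=
  Nanoword [:: 0; 1; 0; 1] (fun n => if n == 0 then a else b).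

(* Invariants of the following shape separate the words w_{a,b}.  For a letter X
   let e_X be the parity of the number of letters Y linked with X (Y occurs exactly
   once between the two occurrences of X) whose projection lies in a tau-stable
   class T; in the oriented variant only those Y whose other occurrence comes
   after the second X count.  Then sum_X F(|X|, e_X) is a homotopy invariant when
   F(x, false) = 0 and F(x, true) + F(tau x, true) = 0, and, in the oriented
   variant, F(x, true) = 0 on T: the first move adds an unlinked letter, the second
   two letters with the same links and opposite projections, and the third only
   exchanges links among three letters of equal projection.  On w_{a,b} the sum is
   F(a, [b in T]) + F(b, [a in T] and not oriented).  The oriented Z/2-valued
   instance with F(x, true) = [x ~ a] and T the orbit of b recognises the orbits of
   a and b in order; the integer-valued one weighting a by 1 and tau a by -1
   tells a from tau a. *)

From mathcomp Require Import all_boot all_algebra zify.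
From mathcomp Require Import boolp.
Set Implicit Arguments. Unset Strict Implicit. Unset Printing Implicit Defensive.
Import GRing.Theory.
Local Open Scope ring_scope.

Section Segments.
Variable T : eqType.

Fixpoint after (X : T) (w : seq T) : seq T :=
  if w is y :: w' then (if y == X then w' else after X w') else [::].
Fixpoint before (X : T) (w : seq T) : seq T :=
  if w is y :: w' then (if y == X then [::] else y :: before X w') else [::].
Definition between X w := before X (after X w).
Definition past X w := after X (after X w).

Lemma after_cat X u v : after X (u ++ v) = if X \in u then after X u ++ v else after X v.
Proof. by elim: u => [|y u IH] //=; rewrite in_cons IH (eq_sym X); case: (y == X). Qed.

Lemma before_cat X u v : before X (u ++ v) = if X \in u then before X u else u ++ before X v.
Proof.
elim: u => [|y u IH] //=; rewrite in_cons IH (eq_sym X).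
by case: (y == X) => //=; case: (X \in u).
Qed.

Lemma mem_after X w : {subset after X w <= w}.
Proof.
elim: w => [|y w IH] //= z; case: (y == X) => H; rewrite in_cons ?H ?IH ?orbT //.
Qed.

Lemma mem_before X w : {subset before X w <= w}.
Proof.
elim: w => [|y w IH] //= z; case: (y == X) => //; rewrite !in_cons.
by case/orP => [->|/IH ->]; rewrite ?orbT.
Qed.

Lemma mem_between X w : {subset between X w <= w}.
Proof. by move=> z /mem_before /mem_after. Qed.

Lemma mem_past X w : {subset past X w <= w}.
Proof. by move=> z /mem_after /mem_after. Qed.

Lemma after_filter (q : pred T) X w : q X -> after X (filter q w) = filter q (after X w).
Proof.
move=> qX; elim: w => [|y w IH] //=.
case qy: (q y) => /=; first by case: (y == X).
by case: eqP => [E|_ //]; rewrite E qX in qy.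
Qed.

Lemma before_filter (q : pred T) X w : q X -> before X (filter q w) = filter q (before X w).
Proof.
move=> qX; elim: w => [|y w IH] //=.
case qy: (q y) => /=; first by case: (y == X) => //=; rewrite qy IH.
by case: eqP => [E|_ //=]; [rewrite E qX in qy | rewrite qy].
Qed.

Lemma between_filter (q : pred T) X w : q X -> between X (filter q w) = filter q (between X w).
Proof. by move=> qX; rewrite /between after_filter // before_filter. Qed.

Lemma past_filter (q : pred T) X w : q X -> past X (filter q w) = filter q (past X w).
Proof. by move=> qX; rewrite /past !after_filter. Qed.

Section BlockCongruence.
Variable R : seq T -> seq T -> Prop.
Hypothesis R_refl : forall s, R s s.
Hypothesis R_cat : forall s s' r r', R s s' -> R r r' -> R (s ++ r) (s' ++ r').

Lemma between_past_congr X x y z t m1 m2 m3 m1' m2' m3' :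
  R m1 m1' -> R m2 m2' -> R m3 m3' ->
  X \notin m1 -> X \notin m2 -> X \notin m3 ->
  X \notin m1' -> X \notin m2' -> X \notin m3' ->
  R (between X (x ++ m1 ++ y ++ m2 ++ z ++ m3 ++ t))
    (between X (x ++ m1' ++ y ++ m2' ++ z ++ m3' ++ t)) /\
  R (past X (x ++ m1 ++ y ++ m2 ++ z ++ m3 ++ t))
    (past X (x ++ m1' ++ y ++ m2' ++ z ++ m3' ++ t)).
Proof.
move=> r1 r2 r3 /negbTE n1 /negbTE n2 /negbTE n3 /negbTE n1' /negbTE n2' /negbTE n3'.
rewrite /between /past !(after_cat, before_cat, n1, n2, n3, n1', n2', n3').
repeat (case: ifP => _; rewrite ?(after_cat, before_cat, n1, n2, n3, n1', n2', n3')).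
all: split; repeat (first [apply: R_refl | apply: R_cat | eassumption]).
Qed.

Lemma between_past_congr1 X x y m m' : R m m' -> X \notin m -> X \notin m' ->
  R (between X (x ++ m ++ y)) (between X (x ++ m' ++ y)) /\
  R (past X (x ++ m ++ y)) (past X (x ++ m' ++ y)).
Proof.
move=> r Xm Xm'.
have := between_past_congr (m2 := [::]) (m3 := [::]) (m2' := [::]) (m3' := [::]) x y [::] [::]
  r (R_refl _) (R_refl _) Xm isT isT Xm' isT isT.
by rewrite !cats0.
Qed.

End BlockCongruence.

Lemma count_predI_mem (a : pred T) (r s : seq T) : uniq r ->
  count (predI a (mem r)) s = (\sum_(A <- r) a A * count_mem A s)%N.
Proof.
elim: r => [_|A r IH /= /andP [Ar /IH IHr]].
  by rewrite big_nil (eq_count (a2 := pred0)) ?count_pred0 // => y /=; rewrite andbF.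
rewrite big_cons -IHr {IH IHr}; elim: s => [|y s IHs] /=; first by rewrite muln0.
rewrite IHs inE mulnDr; case: (y =P A) => [->|_] /=; last by rewrite muln0; lia.
by rewrite (negbTE Ar) andbT andbF muln1; lia.
Qed.

Lemma count_predI_split (a q : pred T) s :
  count a s = (count (predI a (predC q)) s + count (predI a q) s)%N.
Proof. by elim: s => //= y s ->; case: (a y); case: (q y) => /=; lia. Qed.

Lemma perm_undup_cat (r w w' : seq T) : uniq r -> {in r, forall X, X \notin w'} ->
  w =i r ++ w' -> perm_eq (undup w) (r ++ undup w').
Proof.
move=> ur rw' ww'; apply: uniq_perm; rewrite ?undup_uniq //.
  rewrite cat_uniq ur undup_uniq andbT; apply/hasPn => X; rewrite mem_undup.
  by apply: contraTN => /rw'.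
by move=> X; rewrite mem_undup ww' !mem_cat mem_undup.
Qed.

Lemma filter_notin_id (r s : seq T) : {in r, forall X, X \notin s} ->
  [seq y <- s | y \notin r] = s.
Proof. by move=> rs; apply/all_filterP/allP => y ys; apply: contraL ys => /rs. Qed.

Lemma between_past_twins X A B x y z :
  X \notin [:: A; B] -> A \notin x ++ y ++ z -> B \notin x ++ y ++ z ->
  let w := x ++ [:: A; B] ++ y ++ [:: B; A] ++ z in
  count_mem A (between X w) = count_mem B (between X w) /\
  (A \in past X w) = (B \in past X w).
Proof.
move=> XAB Axyz Bxyz w; subst w.
pose R s s' := (count_mem A s + count_mem B s' = count_mem B s + count_mem A s')%N.
have R_cat s s' u u' : R s s' -> R u u' -> R (s ++ u) (s' ++ u').
  by rewrite /R !count_cat; lia.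
have R_AB : R [:: A; B] [::] by rewrite /R /= !eqxx (eq_sym B A); lia.
have R_BA : R [:: B; A] [::] by rewrite /R /= !eqxx (eq_sym B A); lia.
have XBA : X \notin [:: B; A] by move: XAB; rewrite !inE orbC.
have [] := between_past_congr (R := R) (m3 := [::]) (m3' := [::]) (fun _ => addnC _ _) R_cat
  x y [::] z R_AB R_BA (addnC _ _) XAB XBA isT isT isT isT.
have count0 C : C \notin x ++ y ++ z -> count_mem C (between X (x ++ y ++ z)) = 0%N /\
    count_mem C (past X (x ++ y ++ z)) = 0%N.
  by move=> Cxyz; split; apply/count_memPn; apply: contra Cxyz; [move/mem_between | move/mem_past].
rewrite /R !cat0s; have [[-> ->] [-> ->]] := (count0 A Axyz, count0 B Bxyz).
by rewrite !addn0 => -> past_AB; rewrite -!has_pred1 !has_count past_AB.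
Qed.

Lemma between_past_occ X x u v : X \notin x -> X \notin u ->
  between X (x ++ X :: u ++ X :: v) = u /\ past X (x ++ X :: u ++ X :: v) = v.
Proof.
move=> /negbTE Xx /negbTE Xu.
by rewrite /between /past after_cat Xx /= eqxx before_cat after_cat Xu /= eqxx cats0.
Qed.

End Segments.

Lemma after_map (T U : eqType) (f : T -> U) X w : {in w, forall y, (f y == f X) = (y == X)} ->
  after (f X) (map f w) = map f (after X w).
Proof.
elim: w => [|y w IH] //= fX; rewrite fX ?mem_head //.
by case: (y == X) => //; apply: IH => z zw; apply: fX; rewrite inE zw orbT.
Qed.

Lemma before_map (T U : eqType) (f : T -> U) X w : {in w, forall y, (f y == f X) = (y == X)} ->
  before (f X) (map f w) = map f (before X w).
Proof.
elim: w => [|y w IH] //= fX; rewrite fX ?mem_head //.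
by case: (y == X) => //=; rewrite IH // => z zw; apply: fX; rewrite inE zw orbT.
Qed.

Lemma wf_occurrences (alpha : Type) (p : nat -> alpha) w (X : nat) x u v :
  wf_nanoword (Nanoword w p) -> w = x ++ X :: u ++ X :: v ->
  [/\ X \notin x, X \notin u, X \notin v, between X w = u & past X w = v].
Proof.
move=> /(_ X) + w_eq; rewrite w_eq mem_cat mem_head orbT count_cat /= count_cat /= eqxx /=.
move=> /(_ isT) two.
have [Xx Xu Xv] : [/\ X \notin x, X \notin u & X \notin v].
  by split; apply/count_memPn; move: two => /=; lia.
by have [] := between_past_occ v Xx Xu.
Qed.

Lemma wf_notin_rest (alpha : Type) (p : nat -> alpha) w D s : wf_nanoword (Nanoword w p) ->
  D \in w -> count_mem D w = (count_mem D s + 2)%N -> D \notin s.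
Proof.
by move=> wf Dw; rewrite wf // => two; apply/count_memPn; lia.
Qed.

Section LinkingSum.
Variables (alpha : Type) (tau : alpha -> alpha) (G : zmodType).
Variables (F : alpha -> bool -> G) (T : pred alpha) (oriented : bool).

(* A letter occurring twice between the two occurrences of X contributes evenly, so
   the parity in [letter_term] only sees the letters linked with X. *)
Definition counted (p : nat -> alpha) w X y := T (p y) && (~~ oriented || (y \in past X w)).
Definition letter_term p w X := F (p X) (odd (count (counted p w X) (between X w))).
Definition linking_sum (u : nanoword alpha) :=
  \sum_(X <- undup (nw_word u)) letter_term (nw_proj u) (nw_word u) X.

Lemma linking_sum_split p w w' r : uniq r -> {in r, forall X, X \notin w'} ->
  w =i r ++ w' -> \sum_(X <- r) letter_term p w X = 0 ->
  {in w', forall X, letter_term p w X = letter_term p w' X} ->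
  linking_sum (Nanoword w p) = linking_sum (Nanoword w' p).
Proof.
move=> ur rw' ww' r0 w'_eq; rewrite /linking_sum /=.
rewrite (perm_big _ (perm_undup_cat ur rw' ww')) big_cat /= r0 add0r.
by rewrite !big_seq; apply: eq_bigr => X; rewrite mem_undup; apply: w'_eq.
Qed.

Lemma letter_term_drop p w (r : seq nat) X : X \notin r ->
  ~~ odd (count (predI (counted p w X) (mem r)) (between X w)) ->
  letter_term p w X = letter_term p [seq y <- w | y \notin r] X.
Proof.
move=> Xr even_r; rewrite /letter_term between_filter // count_filter.
rewrite (count_predI_split (counted p w X) (mem r)) oddD (negbTE even_r) addbF.
congr (F _ (odd _)); apply: eq_count => y /=; rewrite /counted past_filter // mem_filter.
by case: (y \in r); rewrite ?andbF ?andbT.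
Qed.

Lemma letter_term_map (f : nat -> nat) pu pv w X : {in w &, injective f} ->
  {in w, forall y, pv (f y) = pu y} -> X \in w ->
  letter_term pv (map f w) (f X) = letter_term pu w X.
Proof.
move=> f_inj pvf Xw.
have fX (s : seq nat) : {subset s <= w} -> {in s, forall y, (f y == f X) = (y == X)}.
  by move=> sw y ys; apply/eqP/eqP => [/(f_inj _ _ (sw _ ys) Xw)|->].
have mem_f (s : seq nat) y : {subset s <= w} -> y \in w -> (f y \in map f s) = (y \in s).
  move=> sw yw; apply/mapP/idP => [[u us /(f_inj _ _ yw (sw _ us)) ->] //|ys].
  by exists y.
have fX_w := fX w (fun _ => id).
have fX_after := fX _ (@mem_after _ X w).
rewrite /letter_term /between (after_map fX_w) (before_map fX_after) pvf // count_map.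
congr (F _ (odd _)); apply: eq_in_count => y /mem_between yw /=.
by rewrite /counted /past (after_map fX_w) (after_map fX_after) pvf // mem_f // => z /mem_past.
Qed.

Lemma linking_sum_iso u v : nw_iso u v -> linking_sum u = linking_sum v.
Proof.
case: u v => w pu [w' pv] [f [/= f_inj [/= <- /= pvf]]]; rewrite /linking_sum /=.
have undup_f : perm_eq (undup (map f w)) (map f (undup w)).
  apply: uniq_perm; rewrite ?undup_uniq ?map_inj_in_uniq ?undup_uniq //.
    by move=> X Y; rewrite !mem_undup; apply: f_inj.
  by move=> Y; rewrite mem_undup (eq_mem_map f (mem_undup w)).
rewrite (perm_big _ undup_f) big_map !big_seq; apply: eq_bigr => X.
by rewrite mem_undup => Xw; rewrite (letter_term_map f_inj pvf).
Qed.

Lemma linking_sum_w_ab a b :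
  linking_sum (w_ab a b) = F a (T b) + F b (T a && ~~ oriented).
Proof.
rewrite /linking_sum /= !big_cons big_nil addr0 /letter_term /counted /between /past /=.
by rewrite !inE !eqxx /= !addn0 !oddb orbT andbT orbF.
Qed.

Lemma linking_sum_nil p : linking_sum (Nanoword [::] p) = 0.
Proof. by rewrite /linking_sum big_nil. Qed.

Hypothesis F_false : forall x, F x false = 0.

Lemma linking_sum_move1 p A x y :
  wf_nanoword (Nanoword (x ++ [:: A; A] ++ y) p) ->
  linking_sum (Nanoword (x ++ [:: A; A] ++ y) p) = linking_sum (Nanoword (x ++ y) p).
Proof.
move=> wf; have [Ax _ Ay _ _] := wf_occurrences (u := [::]) wf erefl.
have xyA : A \notin x ++ y by rewrite mem_cat negb_or Ax Ay.
have drop_A : [seq z <- x ++ [:: A; A] ++ y | z \notin [:: A]] = x ++ y.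
  by rewrite filter_cat /= inE eqxx !filter_notin_id // => X; rewrite inE => /eqP ->.
apply: (linking_sum_split (r := [:: A])) => //.
- by move=> X; rewrite inE => /eqP ->.
- by move=> X; rewrite !mem_cat !inE; case: (X == A); rewrite ?orbT.
- by rewrite big_seq1 /letter_term /between after_cat (negbTE Ax) /= !eqxx /= eqxx F_false.
move=> X XW'; have XA : X \notin [:: A] by rewrite inE; apply: contraTneq XW' => ->.
rewrite -[in RHS]drop_A; apply: letter_term_drop => //.
rewrite count_predI_mem // big_seq1 oddM negb_and; apply/orP; right.
have parity_cat s s' u u' : odd (count_mem A s) = odd (count_mem A s') ->
    odd (count_mem A u) = odd (count_mem A u') ->
    odd (count_mem A (s ++ u)) = odd (count_mem A (s' ++ u')).
  by rewrite !count_cat !oddD => -> ->.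
have parity_AA : odd (count_mem A [:: A; A]) = odd (count_mem A [::]) by rewrite /= eqxx.
have XAA : X \notin [:: A; A] by move: XA; rewrite !inE orbb.
have [-> _] := between_past_congr1 (fun _ => erefl) parity_cat x y parity_AA XAA isT.
suff /count_memPn -> : A \notin between X (x ++ y) by [].
by apply: contra xyA => /mem_between.
Qed.

Hypothesis F_tau : forall x, F x true + F (tau x) true = 0.
Hypothesis T_tau : forall x, T (tau x) = T x.

Lemma F_tau_bool x b : F x b + F (tau x) b = 0.
Proof. by case: b; rewrite ?F_tau ?F_false ?addr0. Qed.

Lemma linking_sum_move2 p A B x y z : p B = tau (p A) ->
  wf_nanoword (Nanoword (x ++ [:: A; B] ++ y ++ [:: B; A] ++ z) p) ->
  linking_sum (Nanoword (x ++ [:: A; B] ++ y ++ [:: B; A] ++ z) p) =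
  linking_sum (Nanoword (x ++ y ++ z) p).
Proof.
move=> pB wf; set W := x ++ _.
have W_A : W = x ++ A :: (B :: y ++ [:: B]) ++ A :: z by rewrite /W /= -catA.
have W_B : W = (x ++ [:: A]) ++ B :: y ++ B :: A :: z by rewrite /W -catA.
have [Ax ABy Az betA pastA] := wf_occurrences wf W_A.
have [ABx By BAz betB pastB] := wf_occurrences wf W_B.
have AB : A != B by apply: contra ABy; rewrite inE => ->.
have Ay : A \notin y by apply: contra ABy; rewrite inE mem_cat => ->; rewrite orbT.
have Bx : B \notin x by apply: contra ABx; rewrite mem_cat => ->.
have Bz : B \notin z by apply: contra BAz; rewrite inE => ->; rewrite orbT.
have Axyz : A \notin x ++ y ++ z by rewrite !mem_cat !negb_or Ax Ay Az.
have Bxyz : B \notin x ++ y ++ z by rewrite !mem_cat !negb_or Bx By Bz.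
have drop_AB : [seq u <- W | u \notin [:: A; B]] = x ++ y ++ z.
  rewrite !filter_cat /= !inE !eqxx (eq_sym B A) (negbTE AB) /=.
  by rewrite !filter_notin_id // => C; rewrite !inE => /orP [] /eqP ->.
apply: (linking_sum_split (r := [:: A; B])) => //.
- by rewrite /= inE AB.
- by move=> C; rewrite !inE => /orP [] /eqP ->.
- by move=> C; rewrite /W !mem_cat !inE; case: (C == A); case: (C == B); rewrite ?orbT.
- rewrite big_cons big_seq1 /letter_term betA betB pB.
  have -> : odd (count (counted p W A) (B :: y ++ [:: B])) = odd (count (counted p W A) y).
    by rewrite /= count_cat /= addn0 addnCA addnn oddD odd_double addbF.
  rewrite (@eq_in_count _ _ (counted p W B)) ?F_tau_bool // => u uy.
  suff uA : (u == A) = false by rewrite /counted pastA pastB inE uA.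
  by apply: contraNF Ay => /eqP <-.
move=> X XW'; have XAB : X \notin [:: A; B].
  by rewrite !inE negb_or; apply/andP; split; apply: contraTneq XW' => ->.
rewrite -[in RHS]drop_AB; apply: letter_term_drop => //.
rewrite count_predI_mem /= ?inE ?AB // big_cons big_seq1.
have [count_AB past_AB] := between_past_twins XAB Axyz Bxyz.
have -> : counted p W X B = counted p W X A by rewrite /counted pB T_tau past_AB.
by rewrite -count_AB addnn odd_double.
Qed.

Hypothesis F_oriented : oriented -> forall x, T x -> F x true = 0.

Section Move3.
Variables (p : nat -> alpha) (A B C : nat) (x y z t : seq nat).
Hypotheses (pAB : p A = p B) (pBC : p B = p C).
Hypotheses (AB : A != B) (AC : A != C) (BC : B != C).
Hypotheses (Ax : A \notin x) (Ay : A \notin y) (Az : A \notin z) (At : A \notin t).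
Hypotheses (Bx : B \notin x) (By : B \notin y) (Bz : B \notin z) (Bt : B \notin t).
Hypotheses (Cx : C \notin x) (Cy : C \notin y) (Cz : C \notin z) (Ct : C \notin t).

Let fresh := (eq_sym B A, eq_sym C A, eq_sym C B, negbTE AB, negbTE AC, negbTE BC,
  negbTE Ax, negbTE Ay, negbTE Az, negbTE At, negbTE Bx, negbTE By, negbTE Bz, negbTE Bt,
  negbTE Cx, negbTE Cy, negbTE Cz, negbTE Ct).
Let W := x ++ [:: A; B] ++ y ++ [:: A; C] ++ z ++ [:: B; C] ++ t.
Let W' := x ++ [:: B; A] ++ y ++ [:: C; A] ++ z ++ [:: C; B] ++ t.

Lemma move3_term_A : letter_term p W A = letter_term p W' A.
Proof.
have [betW pastW] : between A W = B :: y /\ past A W = C :: z ++ B :: C :: t.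
  by apply: (@between_past_occ _ A x (B :: y)); rewrite !(inE, fresh).
have [betW' pastW'] : between A W' = y ++ [:: C] /\ past A W' = z ++ C :: B :: t.
  rewrite /W' (_ : x ++ _ = (x ++ [:: B]) ++ A :: (y ++ [:: C]) ++ A :: (z ++ C :: B :: t)).
    by apply: (@between_past_occ _ A _ (y ++ [:: C])); rewrite !(mem_cat, inE, fresh).
  by rewrite -!catA.
have same_past : past A W =i past A W'.
  move=> u; rewrite pastW pastW' !(mem_cat, inE).
  by case: (u == B); case: (u == C); rewrite ?orbT ?orbF.
rewrite /letter_term betW betW' (eq_count (a2 := counted p W' A)); last first.
  by move=> u; rewrite /counted same_past.
by rewrite count_cat /= addn0 addnC /counted pastW' pBC !(mem_cat, inE, eqxx, orbT).
Qed.

Lemma move3_term_B : letter_term p W B = letter_term p W' B.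
Proof.
have [betW pastW] : between B W = y ++ A :: C :: z /\ past B W = C :: t.
  rewrite /W (_ : x ++ _ = (x ++ [:: A]) ++ B :: (y ++ A :: C :: z) ++ B :: C :: t).
    by apply: (@between_past_occ _ B _ (y ++ A :: C :: z)); rewrite !(mem_cat, inE, fresh).
  by rewrite -!catA.
have [betW' pastW'] : between B W' = A :: y ++ C :: A :: z ++ [:: C] /\ past B W' = t.
  rewrite /W' (_ : x ++ _ = x ++ B :: (A :: y ++ C :: A :: z ++ [:: C]) ++ B :: t).
    by apply: (@between_past_occ _ B x (A :: y ++ C :: A :: z ++ [:: C]));
      rewrite !(mem_cat, inE, fresh).
  by rewrite /= -catA /= -catA.
have same_yz : {in y ++ z, counted p W B =1 counted p W' B}.
  move=> u uyz; rewrite /counted pastW pastW' inE (_ : (u == C) = false) //.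
  by apply: contraTF uyz => /eqP ->; rewrite mem_cat !fresh.
have oddW : odd (count (counted p W B) (y ++ A :: C :: z)) =
    odd (count (counted p W' B) (y ++ z)) (+) (T (p A) && ~~ oriented) (+) T (p A).
  rewrite -(eq_in_count same_yz) !count_cat /= !oddD !oddb /counted pastW !inE !fresh eqxx orbT.
  rewrite pAB pBC orbF andbT; set cy := odd _; set cz := odd _.
  by case: cy; case: cz; case: (T (p C)); case: oriented.
have oddW' : odd (count (counted p W' B) (A :: y ++ C :: A :: z ++ [:: C])) =
    odd (count (counted p W' B) (y ++ z)).
  rewrite /= !count_cat /= !count_cat /= !oddD !oddb.
  set cA := counted _ _ _ A; set cC := counted _ _ _ C; set cy := odd _; set cz := odd _.
  by case: cA; case: cC; case: cy; case: cz.
(* In the oriented variant the move shifts the parity by [T (p A)], hence F_oriented. *)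
rewrite /letter_term betW betW' oddW oddW'; case: oriented F_oriented => [F_or | _] /=.
  rewrite andbF addbF; case TA: (T (p A)); last by rewrite addbF.
  have F0 b : F (p B) b = 0 by case: b; rewrite ?F_false // F_or // -pAB.
  by rewrite !F0.
by rewrite andbT -addbA addbb addbF.
Qed.

Lemma move3_term_C : letter_term p W C = letter_term p W' C.
Proof.
have [betW pastW] : between C W = z ++ [:: B] /\ past C W = t.
  rewrite /W (_ : x ++ _ = (x ++ A :: B :: y ++ [:: A]) ++ C :: (z ++ [:: B]) ++ C :: t).
    by apply: (@between_past_occ _ C _ (z ++ [:: B])); rewrite !(mem_cat, inE, fresh).
  by rewrite -!catA /= -!catA.
have [betW' pastW'] : between C W' = A :: z /\ past C W' = B :: t.
  rewrite /W' (_ : x ++ _ = (x ++ B :: A :: y) ++ C :: (A :: z) ++ C :: B :: t).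
    by apply: (@between_past_occ _ C _ (A :: z)); rewrite !(mem_cat, inE, fresh).
  by rewrite -!catA.
have same_z : {in z, counted p W C =1 counted p W' C}.
  move=> u uz; rewrite /counted pastW pastW' inE (_ : (u == B) = false) //.
  by apply: contraTF uz => /eqP ->; rewrite fresh.
rewrite /letter_term betW betW' count_cat (eq_in_count same_z) /= addn0 addnC.
by rewrite /counted pastW pastW' !inE !fresh pAB.
Qed.

Lemma move3_term_other X : X \notin [:: A; B; C] -> letter_term p W X = letter_term p W' X.
Proof.
rewrite !inE !negb_or => /and3P [XA XB XC].
have swap2 (a b : nat) : perm_eq [:: a; b] [:: b; a] by rewrite (perm_catC [:: a]).
have notin2 a b : X != a -> X != b -> X \notin [:: a; b] by rewrite !inE negb_or => -> ->.
have [perm_between perm_past] := between_past_congr (R := fun s s' => perm_eq s s') (@perm_refl _)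
  (fun _ _ _ _ => @perm_cat _ _ _ _ _) x y z t (swap2 A B) (swap2 A C) (swap2 B C)
  (notin2 _ _ XA XB) (notin2 _ _ XA XC) (notin2 _ _ XB XC)
  (notin2 _ _ XB XA) (notin2 _ _ XC XA) (notin2 _ _ XC XB).
rewrite /letter_term (permP perm_between); congr (F _ (odd _)).
by apply: eq_count => u; rewrite /counted (perm_mem perm_past).
Qed.

End Move3.

Lemma linking_sum_move3 p A B C x y z t : A <> B -> A <> C -> B <> C -> p A = p B -> p B = p C ->
  wf_nanoword (Nanoword (x ++ [:: A; B] ++ y ++ [:: A; C] ++ z ++ [:: B; C] ++ t) p) ->
  linking_sum (Nanoword (x ++ [:: A; B] ++ y ++ [:: A; C] ++ z ++ [:: B; C] ++ t) p) =
  linking_sum (Nanoword (x ++ [:: B; A] ++ y ++ [:: C; A] ++ z ++ [:: C; B] ++ t) p).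
Proof.
move=> /eqP AB /eqP AC /eqP BC pAB pBC wf.
set W := x ++ _; set W' := x ++ _.
have fresh4 D : D = A \/ D = B \/ D = C ->
    [/\ D \notin x, D \notin y, D \notin z & D \notin t].
  move=> D_ABC; apply/and4P; rewrite -!negb_or -!mem_cat; apply: (wf_notin_rest wf).
    by rewrite /W; case: D_ABC => [->|[->|->]]; rewrite !(mem_cat, inE, eqxx, orbT).
  rewrite !count_cat /= !(eq_sym _ D).
  by case: D_ABC => [->|[->|->]]; rewrite ?eqxx ?(negbTE AB) ?(negbTE AC) ?(negbTE BC) /=; lia.
have [Ax Ay Az At] := fresh4 A (or_introl erefl).
have [Bx By Bz Bt] := fresh4 B (or_intror (or_introl erefl)).
have [Cx Cy Cz Ct] := fresh4 C (or_intror (or_intror erefl)).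
apply: (linking_sum_split (r := [::])) => // [X | | X XW'].
- by rewrite /W /W' !(mem_cat, inE); do 3 case: (X == _); rewrite ?orbT.
- exact: big_nil.
have [->|XA] := eqVneq X A; first exact: move3_term_A.
have [->|XB] := eqVneq X B; first exact: move3_term_B.
have [->|XC] := eqVneq X C; first exact: move3_term_C.
by apply: move3_term_other; rewrite !inE negb_or XA negb_or XB XC.
Qed.

Lemma linking_sum_homotopic u v : homotopic tau u v -> linking_sum u = linking_sum v.
Proof.
elim=> {u v} [u v _ _ /linking_sum_iso // | u v wf_u _ uv | _ _ _ -> // | _ _ _ _ -> _ -> //].
case: uv wf_u => [p A x y | p A B x y z pB | p A B C x y z t AB AC BC pAB pBC] wf_u.
- exact: linking_sum_move1.
- exact: linking_sum_move2.
- exact: linking_sum_move3.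
Qed.

End LinkingSum.

Lemma homotopic_refl (alpha : Type) (tau : alpha -> alpha) u :
  wf_nanoword u -> homotopic tau u u.
Proof.
by move=> wf_u; apply: hom_iso => //; exists id; split=> [x y _ _ | ]; rewrite ?map_id.
Qed.

Lemma w_ab_wf (alpha : Type) (a b : alpha) : wf_nanoword (w_ab a b).
Proof. by case=> [|[|x]]. Qed.

Section Orbits.
Variables (alpha : Type) (tau : alpha -> alpha).
Hypothesis tau_inv : involutive tau.

Definition in_orbit a x := `[< x = a \/ x = tau a >].
Definition sign a x : int := if `[< x = a >] then 1 else if `[< x = tau a >] then -1 else 0.

Lemma in_orbitP a x : reflect (x = a \/ x = tau a) (in_orbit a x).
Proof. exact: asboolP. Qed.

Lemma in_orbit_refl a : in_orbit a a.
Proof. by apply/in_orbitP; left. Qed.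

Lemma in_orbit_tau a x : in_orbit a (tau x) = in_orbit a x.
Proof.
apply/in_orbitP/in_orbitP => [[] /(congr1 tau) | [] ->]; rewrite ?tau_inv; by [right | left].
Qed.

Lemma in_orbit_sym a x : in_orbit a x = in_orbit x a.
Proof. by apply/in_orbitP/in_orbitP => [] [] ->; rewrite ?tau_inv; by [left | right]. Qed.

Lemma in_orbit_trans a b c : in_orbit a b -> in_orbit b c -> in_orbit a c.
Proof.
rewrite (in_orbit_sym a) => /in_orbitP [] -> // bc.
by rewrite in_orbit_sym in_orbit_tau in_orbit_sym.
Qed.

Lemma in_orbit_eq a b : tau a <> b -> in_orbit a b -> b = a.
Proof. by move=> ab /in_orbitP [] // /esym. Qed.

Lemma sign_self a : sign a a = 1.
Proof. by rewrite /sign asboolT. Qed.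

Lemma sign_tau_self a : tau a <> a -> sign a (tau a) = -1.
Proof. by move=> nfix_a; rewrite /sign asboolF // asboolT. Qed.

Lemma sign_tau a x : tau a <> a -> sign a (tau x) = - sign a x.
Proof.
move=> nfix_a; have [->|xa] := pselect (x = a); first by rewrite sign_tau_self // sign_self.
have [->|xta] := pselect (x = tau a); first by rewrite tau_inv sign_self sign_tau_self ?opprK.
by rewrite /sign !asboolF ?oppr0 // => /(congr1 tau); rewrite !tau_inv.
Qed.

Lemma sign_eq1 a x : in_orbit a x -> (tau a <> a -> sign a x = 1) -> x = a.
Proof.
case/in_orbitP => [-> // | ->] sign1; have [-> // | nfix_a] := pselect (tau a = a).
by move: (sign1 nfix_a); rewrite sign_tau_self.
Qed.

Definition orbit_link a b : nanoword alpha -> 'Z_2 :=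
  linking_sum (fun x t => (t && in_orbit a x)%:R) (in_orbit b) true.

Definition signed_link a c : nanoword alpha -> int :=
  linking_sum (fun x t => sign a x *+ t) (in_orbit c) false.

Lemma orbit_link_homotopic a b u v : ~~ in_orbit a b -> homotopic tau u v ->
  orbit_link a b u = orbit_link a b v.
Proof.
move=> nab; apply: linking_sum_homotopic => // [x | x | _ x bx] /=.
- by rewrite in_orbit_tau; case: in_orbit => //; apply/eqP.
- exact: in_orbit_tau.
- by case ax: (in_orbit a x) => //; case/negP: nab; rewrite (in_orbit_trans ax) // in_orbit_sym.
Qed.

Lemma signed_link_homotopic a c u v : tau a <> a -> homotopic tau u v ->
  signed_link a c u = signed_link a c v.
Proof.
move=> nfix_a; apply: linking_sum_homotopic => // [x | x].
- by rewrite sign_tau // addrN.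
- exact: in_orbit_tau.
Qed.

Lemma orbit_link_w_ab a b a' b' :
  orbit_link a b (w_ab a' b') = (in_orbit b b' && in_orbit a a')%:R.
Proof. by rewrite /orbit_link linking_sum_w_ab andbF addr0. Qed.

Lemma signed_link_w_ab a c a' b' :
  signed_link a c (w_ab a' b') = sign a a' *+ in_orbit c b' + sign a b' *+ in_orbit c a'.
Proof. by rewrite /signed_link linking_sum_w_ab andbT. Qed.

Lemma w_ab_not_contractible a b : tau a <> b -> ~ contractible tau (w_ab a b).
Proof.
rewrite /contractible /= => ab hom0.
have [lk | nlk] := boolP (in_orbit a b).
  have ba := in_orbit_eq ab lk; subst b.
  move: (signed_link_homotopic a ab hom0).
  by rewrite signed_link_w_ab /signed_link linking_sum_nil in_orbit_refl sign_self.
move: (orbit_link_homotopic nlk hom0).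
by rewrite orbit_link_w_ab /orbit_link linking_sum_nil !in_orbit_refl => /eqP.
Qed.

Lemma w_ab_homotopic_diff_orbit a b a' b' : ~~ in_orbit a b ->
  homotopic tau (w_ab a b) (w_ab a' b') -> a' = a /\ b' = b.
Proof.
move=> nab hom.
have /andP [bb' aa'] : in_orbit b b' && in_orbit a a'.
  move: (orbit_link_homotopic nab hom); rewrite !orbit_link_w_ab !in_orbit_refl.
  by case: (in_orbit b b' && _) => // /eqP.
have nba : in_orbit b a = false by rewrite in_orbit_sym; apply: negbTE.
have out_a x : in_orbit a x -> in_orbit b x = false.
  by move=> ax; apply: contraFF nba => /in_orbit_trans; apply; rewrite in_orbit_sym.
have out_b x : in_orbit b x -> in_orbit a x = false.
  by move=> bx; apply: contraNF nab => /in_orbit_trans; apply; rewrite in_orbit_sym.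
split.
  apply: sign_eq1 => // nfix_a; move: (signed_link_homotopic b nfix_a hom).
  rewrite !signed_link_w_ab in_orbit_refl bb' nba (out_a a') // sign_self /=.
  by rewrite !mulr0n !addr0 !mulr1n.
apply: sign_eq1 => // nfix_b; move: (signed_link_homotopic a nfix_b hom).
rewrite !signed_link_w_ab in_orbit_refl aa' (negbTE nab) (out_b b') // sign_self /=.
by rewrite !mulr0n !add0r !mulr1n.
Qed.

Lemma w_aa_homotopic a a' : tau a <> a ->
  homotopic tau (w_ab a a) (w_ab a' a') -> a' = a.
Proof.
move=> nfix_a hom; move: (signed_link_homotopic a nfix_a hom).
rewrite !signed_link_w_ab in_orbit_refl sign_self.
case aa': (in_orbit a a') => sign2; last by move: sign2; rewrite !mulr0n.
by apply: sign_eq1 => // _; move: sign2; rewrite !mulr1n; lia.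
Qed.

End Orbits.

Theorem theorem8p3 (alpha : Type) (tau : alpha -> alpha)
  (Htau : forall x, tau (tau x) = x) :
  (forall a b : alpha, tau a <> b -> ~ contractible tau (w_ab a b)) /\
  (forall a b a' b' : alpha, tau a <> b -> tau a' <> b' ->
     (homotopic tau (w_ab a b) (w_ab a' b') <-> a = a' /\ b = b')).
Proof.
split=> [a b | a b a' b' ab a'b']; first exact: w_ab_not_contractible.
split=> [hom | [<- <-]]; last exact/homotopic_refl/w_ab_wf.
have [lk | nlk] := boolP (in_orbit tau a b); last first.
  by have [-> ->] := w_ab_homotopic_diff_orbit Htau nlk hom.
have [lk' | nlk'] := boolP (in_orbit tau a' b'); last first.
  by have [-> ->] := w_ab_homotopic_diff_orbit Htau nlk' (hom_sym hom).
have ba := in_orbit_eq ab lk; have b'a' := in_orbit_eq a'b' lk'; subst b b'.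
by have -> := w_aa_homotopic Htau ab hom.
Qed.
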